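(* Let $\Lambda_1,\Lambda_2$ be bivariate tail dependence functions and, for $i=1,2$, let $C_i=C^{LEV}(\cdot\,;\Lambda_i)$ be the corresponding lower extreme value copulas, with survival copulas $\widehat C_i=C^{EV}(\cdot\,;\Lambda_i)$. Then the following are equivalent: (i) $\Lambda(\boldsymbol w;C_1)\le\Lambda(\boldsymbol w;C_2)$ for all $\boldsymbol w\in[0,\infty)^2$; (ii) $\widehat C_1(\boldsymbol u)\le\widehat C_2(\boldsymbol u)$ for all $\boldsymbol u\in[0,1]^2$; (iii) $C_1(\boldsymbol u)\le C_2(\boldsymbol u)$ for all $\boldsymbol u\in[0,1]^2$; (iv) $C_1\le_{loc}C_2$.
   Context: A 2-copula is a grounded, 2-increasing function $C:[0,1]^2\to[0,1]$ with uniform margins. Its tail dependence function is $\Lambda(\boldsymbol w;C)=\lim_{s\searrow0}C(s\boldsymbol w)/s$, $\boldsymbol w\in[0,\infty)^2$. A bivariate tail dependence function is a function $\Lambda:[0,\infty)^2\to[0,\infty)$ that is the tail dependence function of some 2-copula; equivalently, $\Lambda(w_1,w_2)=(w_1+w_2)A(w_1/(w_1+w_2))$ (and $\Lambda(0,0)=0$) for a concave $A:[0,1]\to[0,1/2]$ with $0\le A(t)\le\min\{t,1-t\}$. The extreme value copula is $C^{EV}(u_1,u_2;\Lambda)=\exp(\log u_1+\log u_2+\Lambda(-\log u_1,-\log u_2))$, and the lower extreme value copula is its survival copula $C^{LEV}(u_1,u_2;\Lambda)=u_1+u_2-1+C^{EV}(1-u_1,1-u_2;\Lambda)$; it satisfies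 $\Lambda(\cdot\,;C^{LEV}(\cdot;\Lambda))=\Lambda$. $C_1\le_{loc}C_2$ means there is $\varepsilon>0$ with $C_1\le C_2$ on $B_\varepsilon(\boldsymbol 0)\cap[0,1]^2$ (Euclidean ball). *)

From HB Require Import structures.
From mathcomp Require Import all_boot all_order all_algebra.
From mathcomp Require Import all_classical all_reals all_analysis.
Set Implicit Arguments. Unset Strict Implicit. Unset Printing Implicit Defensive.
Import Order.TTheory GRing.Theory Num.Theory.
Import numFieldNormedType.Exports.
Local Open Scope classical_set_scope.
Local Open Scope ring_scope.

Section Copulas.
Variable R : realType.

Definition in01 (x : R) : Prop := 0 <= x <= 1.

(* A 2-copula, represented as a function R -> R -> R; only its values on
   [0,1]^2 matter. *)
Definition is_copula2 (C : R -> R -> R) : Prop :=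
  (forall u v, in01 u -> in01 v -> in01 (C u v)) /\
  (forall u, in01 u -> C u 0 = 0 /\ C 0 u = 0) /\
  (forall u, in01 u -> C u 1 = u /\ C 1 u = u) /\
  (forall u1 u2 v1 v2, in01 u1 -> in01 u2 -> in01 v1 -> in01 v2 ->
     u1 <= u2 -> v1 <= v2 ->
     0 <= C u2 v2 - C u2 v1 - C u1 v2 + C u1 v1).

Definition tdf (C : R -> R -> R) (w1 w2 : R) : R :=
  lim ((fun s : R => C (s * w1) (s * w2) / s) @ 0^'+).

Definition is_btdf (L : R -> R -> R) : Prop :=
  exists C, is_copula2 C /\
    (forall w1 w2, 0 <= w1 -> 0 <= w2 ->
       (fun s : R => C (s * w1) (s * w2) / s) @ 0^'+ --> L w1 w2) /\
    (forall w1 w2, 0 <= w1 -> 0 <= w2 -> 0 <= L w1 w2).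

(* Extreme value copula, extended continuously by 0 on the axes
   (where log u is undefined). *)
Definition CEV (L : R -> R -> R) (u1 u2 : R) : R :=
  if (u1 == 0) || (u2 == 0) then 0
  else expR (ln u1 + ln u2 + L (- ln u1) (- ln u2)).

Definition CLEV (L : R -> R -> R) (u1 u2 : R) : R :=
  u1 + u2 - 1 + CEV L (1 - u1) (1 - u2).

Definition le_loc (C1 C2 : R -> R -> R) : Prop :=
  exists eps : R, 0 < eps /\
    forall u1 u2, in01 u1 -> in01 u2 -> u1 ^+ 2 + u2 ^+ 2 < eps ^+ 2 ->
      C1 u1 u2 <= C2 u1 u2.

End Copulas.

From HB Require Import structures.
From mathcomp Require Import all_boot all_order all_algebra.
From mathcomp Require Import all_classical all_reals all_analysis.
From mathcomp Require Import ring lra.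
Import Order.TTheory GRing.Theory Num.Theory.
Import numFieldNormedType.Exports.
Local Open Scope classical_set_scope.
Local Open Scope ring_scope.

(** Any limit [L] of [C(s w)/s] inherits the 1-Lipschitz property of the
    copula [C] and is positively homogeneous.  Writing [a = -ln(1 - x1)] and
    [b = -ln(1 - x2)], one has [C^LEV(L)(x) = x1 + x2 - 1 + exp(L(a,b) - a - b)]
    with [a - x1, b - x2 = O(|x|^2)], so a second-order expansion of [exp] and
    the Lipschitz bound give [C^LEV(L)(x) = L(x) + O(|x|^2)]; together with
    homogeneity, the tail dependence function of [C^LEV(L)] is [L].  Hence
    (i) is the pointwise order [L1 <= L2], which is (ii) because [exp] and
    [-ln] are monotone, (ii) and (iii) differ by the reflection [u |-> 1 - u],
    and [<=_loc] already determines the tail dependence functions. *)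

Section Elementary.
Context {R : realType}.

Lemma mulr_cvg_at_right0 (t : R) : 0 < t -> (fun s => s * t) @ 0^'+ --> 0^'+.
Proof.
move=> t0 A [e /= e0 HA]; exists (e / t) => /=; first by rewrite divr_gt0.
move=> s /= hs s0; apply: HA => /=; last by rewrite mulr_gt0.
move: hs; rewrite !sub0r !normrN !gtr0_norm ?mulr_gt0 //.
by rewrite ltr_pdivlMr.
Qed.

Lemma lnN1B_bounds (x : R) : 0 <= x <= 1/2 -> x <= - ln (1 - x) <= x + 2 * x ^+ 2.
Proof.
move=> /andP[x0 x1]; apply/andP; split.
  by rewrite lerNr; apply: le_ln1Dx; lra.
have x1_gt0 : 0 < 1 - x by lra.
rewrite -lnV ?posrE //.
have -> : (1 - x)^-1 = 1 + x / (1 - x) by field; lra.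
have x_div_ge0 : 0 <= x / (1 - x) by rewrite divr_ge0 // ltW.
apply: le_trans (le_ln1Dx _) _; first lra.
by rewrite ler_pdivrMr //; nra.
Qed.

Lemma expR_sub1_bounds (x : R) : `|x| <= 1/2 -> 0 <= expR x - 1 - x <= 2 * x ^+ 2.
Proof.
rewrite ler_norml => /andP[x0 x1]; apply/andP; split.
  by have := expR_ge1Dx x; lra.
have x1_gt0 : 0 < 1 - x by lra.
have expR_le : expR x <= (1 - x)^-1.
  by rewrite -[x]opprK expRN lef_pV2 ?posrE ?expR_gt0 //; have := expR_ge1Dx (- x); lra.
have inv_expand : (1 - x)^-1 = 1 + x + x ^+ 2 / (1 - x) by field; lra.
have : x ^+ 2 / (1 - x) <= 2 * x ^+ 2 by rewrite ler_pdivrMr //; nra.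
lra.
Qed.

End Elementary.

Section CopulaLipschitz.
Context {R : realType} {C : R -> R -> R}.
Hypothesis copC : is_copula2 C.

Let in01_0 : in01 (0 : R). Proof. by rewrite /in01 lexx ler01. Qed.
Let in01_1 : in01 (1 : R). Proof. by rewrite /in01 lexx ler01. Qed.

(* The volume of [u1,u2] x [0,v] is nonnegative and that of [u1,u2] x [v,1]
   is at most that of [u1,u2] x [0,1], which is [u2 - u1]. *)
Lemma copula_incr_l u1 u2 v : in01 u1 -> in01 u2 -> in01 v -> u1 <= u2 ->
  0 <= C u2 v - C u1 v <= u2 - u1.
Proof.
case: copC => _ [ground [margin incr]] h1 h2 /[dup] hv /andP[v0 v1] le12.
have := incr u1 u2 0 v h1 h2 in01_0 hv le12 v0.
have := incr u1 u2 v 1 h1 h2 hv in01_1 le12 v1.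
rewrite (proj1 (ground _ h1)) (proj1 (ground _ h2)).
rewrite (proj1 (margin _ h1)) (proj1 (margin _ h2)).
by move=> ? ?; apply/andP; split; lra.
Qed.

Lemma copula_incr_r u v1 v2 : in01 u -> in01 v1 -> in01 v2 -> v1 <= v2 ->
  0 <= C u v2 - C u v1 <= v2 - v1.
Proof.
case: copC => _ [ground [margin incr]] /[dup] hu /andP[u0 u1] h1 h2 le12.
have := incr 0 u v1 v2 in01_0 hu h1 h2 u0 le12.
have := incr u 1 v1 v2 hu in01_1 h1 h2 u1 le12.
rewrite (proj2 (ground _ h1)) (proj2 (ground _ h2)).
rewrite (proj2 (margin _ h1)) (proj2 (margin _ h2)).
by move=> ? ?; apply/andP; split; lra.
Qed.

Lemma copula_lipschitz u1 v1 u2 v2 : in01 u1 -> in01 v1 -> in01 u2 -> in01 v2 ->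
  `|C u1 v1 - C u2 v2| <= `|u1 - u2| + `|v1 - v2|.
Proof.
move=> hu1 hv1 hu2 hv2.
have lip_l : `|C u1 v1 - C u2 v1| <= `|u1 - u2|.
  have [le12|/ltW le21] := leP u1 u2.
    have /andP[? ?] := copula_incr_l u1 u2 v1 hu1 hu2 hv1 le12.
    by rewrite distrC (distrC u1) !ger0_norm //; lra.
  have /andP[? ?] := copula_incr_l u2 u1 v1 hu2 hu1 hv1 le21.
  by rewrite !ger0_norm //; lra.
have lip_r : `|C u2 v1 - C u2 v2| <= `|v1 - v2|.
  have [le12|/ltW le21] := leP v1 v2.
    have /andP[? ?] := copula_incr_r u2 v1 v2 hu2 hv1 hv2 le12.
    by rewrite distrC (distrC v1) !ger0_norm //; lra.
  have /andP[? ?] := copula_incr_r u2 v2 v1 hu2 hv2 hv1 le21.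
  by rewrite !ger0_norm //; lra.
rewrite (_ : C u1 v1 - C u2 v2 = (C u1 v1 - C u2 v1) + (C u2 v1 - C u2 v2)).
  exact: le_trans (ler_normD _ _) (lerD lip_l lip_r).
by ring.
Qed.

End CopulaLipschitz.

Lemma near0_mulr_lt {R : realType} (w e : R) : 0 <= w -> 0 < e ->
  \forall s \near 0^'+, s * w < e.
Proof.
move=> w0 e0; near=> s.
have s_gt0 : 0 < s by near: s; exact: nbhs_right_gt.
have : s * (w + 1) < e.
  rewrite -ltr_pdivlMr ?ltr_wpDl //; near: s.
  by apply: nbhs_right_lt; rewrite divr_gt0 ?ltr_wpDl.
nra.
Unshelve. all: by end_near.
Qed.

Section TailDependenceFunction.
Context {R : realType} {C L : R -> R -> R}.
Hypothesis copC : is_copula2 C.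
Hypothesis cvgL : forall {w1 w2}, 0 <= w1 -> 0 <= w2 ->
  (fun s => C (s * w1) (s * w2) / s) @ 0^'+ --> L w1 w2.

Lemma tdf_lipschitz p1 p2 q1 q2 : 0 <= p1 -> 0 <= p2 -> 0 <= q1 -> 0 <= q2 ->
  `|L p1 p2 - L q1 q2| <= `|p1 - q1| + `|p2 - q2|.
Proof.
move=> hp1 hp2 hq1 hq2.
apply: ler_cvg_to (cvg_norm (cvgB (cvgL hp1 hp2) (cvgL hq1 hq2))) (cvg_cst _) _.
have M_ge0 : 0 <= p1 + p2 + q1 + q2 by lra.
near=> s.
have s_gt0 : 0 < s by near: s; exact: nbhs_right_gt.
have sM : s * (p1 + p2 + q1 + q2) < 1 by near: s; exact: near0_mulr_lt.
have in01_sw w : 0 <= w -> w <= p1 + p2 + q1 + q2 -> in01 (s * w).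
  by move=> w0 wM; rewrite /in01; apply/andP; split; nra.
rewrite fctE -mulrBl normrM normfV (gtr0_norm s_gt0) ler_pdivrMr //.
have [i1 i2 i3 i4] :
    [/\ in01 (s * p1), in01 (s * p2), in01 (s * q1) & in01 (s * q2)].
  by split; apply: in01_sw => //; lra.
have := copula_lipschitz copC _ _ _ _ i1 i2 i3 i4.
by rewrite -!mulrBr !normrM (gtr0_norm s_gt0) -mulrDr [_ * s]mulrC.
Unshelve. all: by end_near.
Qed.

Lemma tdf_homogeneous t w1 w2 : 0 < t -> 0 <= w1 -> 0 <= w2 ->
  L (t * w1) (t * w2) = t * L w1 w2.
Proof.
move=> t_gt0 h1 h2.
have cvg_scaled : (fun s => t * (C ((s * t) * w1) ((s * t) * w2) / (s * t)))
    @ 0^'+ --> t * L w1 w2.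
  apply: cvgM; first exact: cvg_cst.
  exact: cvg_comp _ _ (mulr_cvg_at_right0 _ t_gt0) (cvgL h1 h2).
apply: (cvg_unique _ (cvgL (mulr_ge0 (ltW t_gt0) h1) (mulr_ge0 (ltW t_gt0) h2))).
  exact: Rhausdorff.
apply: cvg_trans cvg_scaled; apply: near_eq_cvg; near=> s.
have s_gt0 : 0 < s by near: s; exact: nbhs_right_gt.
by rewrite /= -!mulrA; field; rewrite ?gt_eqF.
Unshelve. all: by end_near.
Qed.

Lemma tdf00 : L 0 0 = 0.
Proof.
have := tdf_homogeneous 2 0 0 (ltr0Sn _ 1) (lexx 0) (lexx 0).
by rewrite mulr0; lra.
Qed.

End TailDependenceFunction.

Section LowerExtremeValueExpansion.
Context {R : realType} {L : R -> R -> R}.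
Hypothesis L_lip : forall {p1 p2 q1 q2}, 0 <= p1 -> 0 <= p2 -> 0 <= q1 -> 0 <= q2 ->
  `|L p1 p2 - L q1 q2| <= `|p1 - q1| + `|p2 - q2|.
Hypothesis L00 : L 0 0 = 0.

Lemma CLEV_sub_le x1 x2 : 0 <= x1 -> 0 <= x2 -> x1 + x2 <= 1/8 ->
  `|CLEV L x1 x2 - L x1 x2| <= 36 * (x1 + x2) ^+ 2.
Proof.
move=> x1_ge0 x2_ge0 small.
have /andP[a_ge a_le] := lnN1B_bounds x1 ltac:(apply/andP; split; lra).
have /andP[b_ge b_le] := lnN1B_bounds x2 ltac:(apply/andP; split; lra).
set a := - ln (1 - x1) in a_ge a_le; set b := - ln (1 - x2) in b_ge b_le.
have CLEVE : CLEV L x1 x2 = x1 + x2 - 1 + expR (L a b - a - b).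
  rewrite /CLEV /CEV ifF; last by apply/norP; split; apply/eqP; lra.
  by congr (_ + expR _); rewrite /a /b !opprK; ring.
have [a_ge0 b_ge0] : 0 <= a /\ 0 <= b by split; lra.
have Lab : `|L a b| <= a + b.
  by have := L_lip a_ge0 b_ge0 (lexx 0) (lexx 0);
    rewrite L00 !subr0 (ger0_norm a_ge0) (ger0_norm b_ge0).
have Ldiff : `|L a b - L x1 x2| <= (a - x1) + (b - x2).
  have [da db] : 0 <= a - x1 /\ 0 <= b - x2 by split; lra.
  by have := L_lip a_ge0 b_ge0 x1_ge0 x2_ge0; rewrite (ger0_norm da) (ger0_norm db).
set E := L a b - a - b in CLEVE.
have ab_le : a + b <= 2 * (x1 + x2) by nra.
have E_le : `|E| <= 4 * (x1 + x2).
  by move: Lab; rewrite /E !ler_norml => /andP[? ?]; apply/andP; split; lra.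
have E_half : `|E| <= 1/2 by apply: le_trans E_le _; lra.
have /andP[expR_ge expR_le] := expR_sub1_bounds _ E_half.
(* [exp E - 1 - E <= 2 E^2 <= 32 (x1 + x2)^2], and the Lipschitz error is at
   most [2 ((a - x1) + (b - x2)) <= 4 (x1 + x2)^2]. *)
have E2_le : E ^+ 2 <= 16 * (x1 + x2) ^+ 2.
  by move: E_le; rewrite ler_norml => /andP[? ?]; nra.
have delta_le : (a - x1) + (b - x2) <= 2 * (x1 + x2) ^+ 2 by nra.
have E_def : E = L a b - a - b by [].
move: Ldiff; rewrite CLEVE !ler_norml => /andP[? ?].
by apply/andP; split; lra.
Qed.

End LowerExtremeValueExpansion.

Section TailDependenceOfLEV.
Context {R : realType}.

Lemma CLEV_tdf_cvg (L : R -> R -> R) w1 w2 : is_btdf L -> 0 <= w1 -> 0 <= w2 ->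
  (fun s => CLEV L (s * w1) (s * w2) / s) @ 0^'+ --> L w1 w2.
Proof.
move=> [C [copC [cvgL _]]] h1 h2.
have W_ge0 : 0 <= w1 + w2 by lra.
apply/cvgrPdist_lt => e e_gt0; near=> s.
have s_gt0 : 0 < s by near: s; exact: nbhs_right_gt.
have sW_small : s * (w1 + w2) < 1/8 by near: s; exact: near0_mulr_lt.
have sW_e : s * (36 * (w1 + w2) ^+ 2) < e.
  by near: s; apply: near0_mulr_lt; rewrite // mulr_ge0 ?sqr_ge0.
have [sw1_ge0 sw2_ge0] : 0 <= s * w1 /\ 0 <= s * w2 by split; apply: mulr_ge0; lra.
have := CLEV_sub_le (tdf_lipschitz copC cvgL) (tdf00 cvgL) _ _ sw1_ge0 sw2_ge0.
rewrite -mulrDr (tdf_homogeneous cvgL) // => /(_ (ltW sW_small)) bound.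
rewrite distrC (_ : _ / s - _ = (CLEV L (s * w1) (s * w2) - s * L w1 w2) / s).
  rewrite normrM normfV (gtr0_norm s_gt0) ltr_pdivrMr //.
  by apply: le_lt_trans bound _; nra.
by field; rewrite gt_eqF.
Unshelve. all: by end_near.
Qed.

Lemma tdf_CLEV (L : R -> R -> R) w1 w2 : is_btdf L -> 0 <= w1 -> 0 <= w2 ->
  tdf (CLEV L) w1 w2 = L w1 w2.
Proof. by move=> bL h1 h2; apply: cvg_lim; [exact: Rhausdorff | exact: CLEV_tdf_cvg]. Qed.

Lemma le_loc_tail_limits (C1 C2 : R -> R -> R) w1 w2 l1 l2 :
  0 <= w1 -> 0 <= w2 -> le_loc C1 C2 ->
  (fun s => C1 (s * w1) (s * w2) / s) @ 0^'+ --> l1 ->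
  (fun s => C2 (s * w1) (s * w2) / s) @ 0^'+ --> l2 -> l1 <= l2.
Proof.
move=> h1 h2 [eps [eps_gt0 C12]] cvg1 cvg2; apply: ler_cvg_to cvg1 cvg2 _.
have W_ge0 : 0 <= w1 + w2 by lra.
near=> s.
have s_gt0 : 0 < s by near: s; exact: nbhs_right_gt.
have sW_1 : s * (w1 + w2) < 1 by near: s; exact: near0_mulr_lt.
have sW_eps : s * (w1 + w2) < eps by near: s; exact: near0_mulr_lt.
have [sw1_ge0 sw2_ge0] : 0 <= s * w1 /\ 0 <= s * w2 by split; apply: mulr_ge0; lra.
rewrite ler_pM2r ?invr_gt0 //; apply: C12; rewrite /in01 ?sw1_ge0 ?sw2_ge0 /=; try lra.
have : (s * (w1 + w2)) ^+ 2 < eps ^+ 2 by rewrite ltr_pXn2r // ?nnegrE; nra.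
nra.
Unshelve. all: by end_near.
Qed.

End TailDependenceOfLEV.

Section ExtremeValueOrder.
Context {R : realType}.

Lemma CEV_le_iff (L1 L2 : R -> R -> R) :
  (forall w1 w2, 0 <= w1 -> 0 <= w2 -> L1 w1 w2 <= L2 w1 w2) <->
  (forall u1 u2, in01 u1 -> in01 u2 -> CEV L1 u1 u2 <= CEV L2 u1 u2).
Proof.
split=> [L12 u1 u2 /andP[u1_ge0 u1_le1] /andP[u2_ge0 u2_le1] | CEV12 w1 w2 h1 h2].
  rewrite /CEV; case: ifP => [//|/norP[u1_neq0 u2_neq0]].
  by rewrite ler_expR lerD2l; apply: L12; rewrite oppr_ge0 ln_le0.
have in01_expRN (w : R) : 0 <= w -> in01 (expR (- w)).
  by move=> w_ge0; rewrite /in01 (ltW (expR_gt0 _)) expR_le1 oppr_le0.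
have := CEV12 _ _ (in01_expRN _ h1) (in01_expRN _ h2).
by rewrite /CEV !(gt_eqF (expR_gt0 _)) /= !expRK !opprK ler_expR lerD2l.
Qed.

Lemma CLEV_le_iff (L1 L2 : R -> R -> R) :
  (forall u1 u2, in01 u1 -> in01 u2 -> CEV L1 u1 u2 <= CEV L2 u1 u2) <->
  (forall u1 u2, in01 u1 -> in01 u2 -> CLEV L1 u1 u2 <= CLEV L2 u1 u2).
Proof.
have in01_1B (u : R) : in01 u -> in01 (1 - u).
  by rewrite /in01 => /andP[? ?]; apply/andP; split; lra.
split=> [CEV12 u1 u2 h1 h2 | CLEV12 u1 u2 h1 h2].
  by rewrite /CLEV lerD2l; apply: CEV12; exact: in01_1B.
by have := CLEV12 _ _ (in01_1B _ h1) (in01_1B _ h2); rewrite /CLEV !subKr lerD2l.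
Qed.

End ExtremeValueOrder.

Theorem mainTheorem9 (R : realType) (L1 L2 : R -> R -> R) :
  is_btdf L1 -> is_btdf L2 ->
  let C1 := CLEV L1 in let C2 := CLEV L2 in
  let P1 := forall w1 w2 : R, 0 <= w1 -> 0 <= w2 -> tdf C1 w1 w2 <= tdf C2 w1 w2 in
  let P2 := forall u1 u2 : R, in01 u1 -> in01 u2 -> CEV L1 u1 u2 <= CEV L2 u1 u2 in
  let P3 := forall u1 u2 : R, in01 u1 -> in01 u2 -> C1 u1 u2 <= C2 u1 u2 in
  let P4 := le_loc C1 C2 in
  (P1 <-> P2) /\ (P2 <-> P3) /\ (P3 <-> P4).
Proof.
move=> bL1 bL2 C1 C2 P1 P2 P3 P4.
have P1E : P1 <-> (forall w1 w2, 0 <= w1 -> 0 <= w2 -> L1 w1 w2 <= L2 w1 w2).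
  by split=> le12 w1 w2 h1 h2; move: (le12 w1 w2 h1 h2); rewrite !tdf_CLEV.
have P3_P4 : P3 -> P4 by move=> le12; exists 1; split=> // u1 u2 h1 h2 _; exact: le12.
have P4_P1 : P4 -> P1.
  move=> loc12; apply/P1E => w1 w2 h1 h2.
  exact: le_loc_tail_limits _ _ _ _ _ _ h1 h2 loc12
    (CLEV_tdf_cvg _ _ _ bL1 h1 h2) (CLEV_tdf_cvg _ _ _ bL2 h1 h2).
have P1_P2 : P1 <-> P2 by rewrite P1E; exact: CEV_le_iff.
have P2_P3 : P2 <-> P3 by exact: CLEV_le_iff.
by split=> //; split=> //; split=> // /P4_P1/P1_P2/P2_P3.
Qed.
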